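(* Let $N\ge 1$ and let $\mathcal{M}_N$ be the set of real symmetric $2N\times 2N$ matrices $\mathbf{V}$ with $\mathbf{V}+\tfrac{i}{2}\mathbf{\Omega}>0$. For $\mathbf{V}\in\mathcal{M}_N$ and real symmetric $2N\times 2N$ matrices $\mathbf{A},\mathbf{B}$ define $$G_{\mathbf{V}}(\mathbf{A},\mathbf{B})=\int_{-1}^{1}d\lambda\;\mathrm{Tr}\Big[\mathbf{B}\,\big(2\mathbf{V}+i\lambda\mathbf{\Omega}\big)^{-1}\mathbf{A}\,\big(2\mathbf{V}+i\lambda\mathbf{\Omega}\big)^{-1}\Big].$$ Then for every real symplectic $2N\times 2N$ matrix $\mathbf{S}$ (i.e. $\mathbf{S}\mathbf{\Omega}\mathbf{S}^T=\mathbf{\Omega}$), every $\mathbf{V}\in\mathcal{M}_N$ and all real symmetric $\mathbf{A},\mathbf{B}$, $$G_{\mathbf{S}\mathbf{V}\mathbf{S}^T}\big(\mathbf{S}\mathbf{A}\mathbf{S}^T,\mathbf{S}\mathbf{B}\mathbf{S}^T\big)=G_{\mathbf{V}}(\mathbf{A},\mathbf{B}).$$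
   Context: $\mathbf{\Omega}$ is the $2N\times 2N$ symplectic form $\mathbf{\Omega}=\begin{pmatrix}0&\mathbb{I}_N\\-\mathbb{I}_N&0\end{pmatrix}$. The set $\mathcal{M}_N$ parametrizes (via covariance matrices) the faithful, zero-displacement $N$-mode bosonic Gaussian states, and is an open subset of the space of real symmetric $2N\times 2N$ matrices, whose tangent space at each point is identified with the real symmetric $2N\times2N$ matrices. $G_{\mathbf{V}}$ is the Kubo-Mori-Bogoliubov (KMB) metric on this manifold (the negative Hessian of the quantum relative entropy between Gaussian states, written in covariance-matrix coordinates). *)

From HB Require Import structures.
From mathcomp Require Import all_boot all_order all_algebra.
From mathcomp Require Import all_classical all_reals all_analysis.
From mathcomp Require Import complex.
Set Implicit Arguments. Unset Strict Implicit. Unset Printing Implicit Defensive.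
Import Order.TTheory GRing.Theory Num.Theory.
Import numFieldNormedType.Exports.
Local Open Scope ring_scope.
Local Open Scope complex_scope.

Definition Omega (R : pzRingType) (N : nat) : 'M[R]_(N + N) :=
  block_mx 0 1%:M (- 1%:M) 0.

Definition symplectic (R : pzRingType) (N : nat) (S : 'M[R]_(N + N)) : Prop :=
  S *m Omega R N *m S^T = Omega R N.

Definition cmx (R : rcfType) (m n : nat) (A : 'M[R]_(m, n)) : 'M[R[i]]_(m, n) :=
  map_mx (fun x => x%:C) A.

Definition adjmx (R : rcfType) (m n : nat) (A : 'M[R[i]]_(m, n)) : 'M[R[i]]_(n, m) :=
  (map_mx (@conjc R) A)^T.

(* Positive definiteness of a complex (Hermitian) matrix: z^* M z > 0 for z <> 0
   (the order on R[i] forces z^* M z to be real). *)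
Definition posdef (R : rcfType) (n : nat) (M : 'M[R[i]]_n) : Prop :=
  forall z : 'cV[R[i]]_n, z != 0 -> 0 < (adjmx z *m M *m z) 0 0.

Definition symmx (R : pzRingType) (n : nat) (A : 'M[R]_n) : Prop := A^T = A.

Definition in_MN (R : rcfType) (N : nat) (V : 'M[R]_(N + N)) : Prop :=
  symmx V /\ posdef (cmx V + ('i / 2%:R) *: cmx (Omega R N)).

Definition KMB_integrand (R : rcfType) (N : nat) (V A B : 'M[R]_(N + N)) (l : R) : R[i] :=
  let M := 2%:R *: cmx V + ('i * l%:C) *: cmx (Omega R N) in
  \tr (cmx B *m invmx M *m cmx A *m invmx M).

Definition KMB (R : realType) (N : nat) (V A B : 'M[R]_(N + N)) : R[i] :=
  (\int[lebesgue_measure]_(l in `[-1%R, 1%R]%classic : set R) @complex.Re R (KMB_integrand V A B l))%:C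
  + 'i * (\int[lebesgue_measure]_(l in `[-1%R, 1%R]%classic : set R) @complex.Im R (KMB_integrand V A B l))%:C.

From HB Require Import structures.
From mathcomp Require Import all_boot all_order all_algebra.
From mathcomp Require Import all_classical all_reals all_analysis.
From mathcomp Require Import complex.
From mathcomp Require Import ring lra.
Set Implicit Arguments. Unset Strict Implicit. Unset Printing Implicit Defensive.
Import Order.TTheory GRing.Theory Num.Theory.
Local Open Scope ring_scope.

(* Since S Omega S^T = Omega, the matrix M_l = 2V + i l Omega transforms as
   M_l |-> S M_l S^T, and Tr[B M^-1 A M^-1] is invariant under the simultaneous
   congruence of A, B and M by any invertible matrix.  It remains to see that
   M_l is invertible for |l| <= 1: it equals (1 + l) W + (1 - l) conj(W) with
   W = V + (i/2) Omega positive definite, hence so is conj(W), and a nontrivial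
   nonnegative combination of positive definite matrices is positive definite. *)

Section CongruenceInvariance.
Variables (F : comUnitRingType) (n : nat).
Implicit Types P Q M A B : 'M[F]_n.

Lemma invmxM P Q : P \in unitmx -> Q \in unitmx ->
  invmx (P *m Q) = invmx Q *m invmx P.
Proof.
move=> uP uQ; have uPQ : P *m Q \in unitmx by rewrite unitmx_mul uP.
have : P *m Q *m (invmx Q *m invmx P) = 1%:M.
  by rewrite mulmxA mulmxK // mulmxV.
by move/(congr1 (mulmx (invmx (P *m Q)))); rewrite mulKmx // mulmx1.
Qed.

Lemma mxtrace_congr_invmx P Q M A B :
  P \in unitmx -> Q \in unitmx -> M \in unitmx ->
  \tr (P *m B *m Q *m invmx (P *m M *m Q) *m (P *m A *m Q) *m invmx (P *m M *m Q))
  = \tr (B *m invmx M *m A *m invmx M).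
Proof.
move=> uP uQ uM; have uPM : P *m M \in unitmx by rewrite unitmx_mul uP.
rewrite !invmxM // !mulmxA !mulmxK // !mulmxKV //.
by rewrite mxtrace_mulC !mulmxA mulVmx // mul1mx.
Qed.

End CongruenceInvariance.

Lemma Omega_mul_Omega (R : pzRingType) (N : nat) :
  Omega R N *m Omega R N = - 1%:M.
Proof.
rewrite /Omega mulmx_block !mulmx0 !mul0mx !mulmx1 !mul1mx !add0r !addr0.
by rewrite (scalar_mx_block N N 1) opp_block_mx oppr0.
Qed.

Lemma Omega_unitmx (R : comUnitRingType) (N : nat) : Omega R N \in unitmx.
Proof.
have OmegaK : Omega R N *m (- Omega R N) = 1%:M.
  by rewrite mulmxN Omega_mul_Omega opprK.
by case: (mulmx1_unit OmegaK).
Qed.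

Lemma symplectic_unitmx (R : comUnitRingType) (N : nat) (S : 'M[R]_(N + N)) :
  symplectic S -> S \in unitmx.
Proof.
by move=> sympS; have := Omega_unitmx R N; rewrite -{1}sympS !unitmx_mul => /andP[/andP[]].
Qed.

Section HermitianForms.
Variable R : rcfType.
Local Open Scope complex_scope.

Lemma cmxM m n p (A : 'M[R]_(m, n)) (B : 'M[R]_(n, p)) :
  cmx (A *m B) = cmx A *m cmx B.
Proof. exact: map_mxM. Qed.

Lemma cmx_congr m n (S : 'M[R]_(m, n)) (X : 'M[R]_n) :
  cmx (S *m X *m S^T) = cmx S *m cmx X *m (cmx S)^T.
Proof. by rewrite !cmxM /cmx map_trmx. Qed.

Lemma cmx_unitmx n (A : 'M[R]_n) : (cmx A \in unitmx) = (A \in unitmx).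
Proof. exact: map_unitmx. Qed.

Lemma map_conjCK m n : involutive (@map_mx _ _ (@Num.conj R[i]) m n).
Proof. by move=> A; rewrite -map_mx_comp map_mx_id // => x /=; rewrite conjCK. Qed.

Lemma map_conjC_cmx m n (A : 'M[R]_(m, n)) : map_mx Num.conj (cmx A) = cmx A.
Proof. by apply/matrixP => i j; rewrite !mxE; apply: conjc_real. Qed.

Lemma adjmxK m n (A : 'M[R[i]]_(m, n)) : adjmx (adjmx A) = A.
Proof. by rewrite /adjmx map_trmx trmxK map_conjCK. Qed.

Definition hform n (M : 'M[R[i]]_n) (z : 'cV[R[i]]_n) : R[i] :=
  (adjmx z *m M *m z) 0 0.

Lemma hform_lincomb n (a b : R[i]) (M1 M2 : 'M[R[i]]_n) z :
  hform (a *: M1 + b *: M2) z = a * hform M1 z + b * hform M2 z.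
Proof. by rewrite /hform mulmxDr mulmxDl -!scalemxAr -!scalemxAl !mxE. Qed.

Lemma hform_conj n (M : 'M[R[i]]_n) z :
  (hform M z)^*%R = hform (map_mx Num.conj M) (map_mx Num.conj z).
Proof.
have adjmx_conj : adjmx (map_mx Num.conj z) = map_mx Num.conj (adjmx z).
  by rewrite /adjmx map_trmx.
by rewrite /hform adjmx_conj -!map_mxM [RHS]mxE.
Qed.

Lemma posdef_conj n (M : 'M[R[i]]_n) : posdef M -> posdef (map_mx Num.conj M).
Proof.
move=> posM z nz_z.
have nz_zc : map_mx Num.conj z != 0.
  by apply: contra nz_z => /eqP zc0; rewrite -(map_conjCK z) zc0 map_mx0.
have pos_hform : 0 < hform M (map_mx Num.conj z) := posM _ nz_zc.
rewrite -[_ 0 0]/(hform _ z) -[z in hform _ z]map_conjCK -hform_conj.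
by rewrite conj_Creal ?gtr0_real.
Qed.

Lemma posdef_conic n (a b : R) (M1 M2 : 'M[R[i]]_n) :
  posdef M1 -> posdef M2 -> 0 <= a -> 0 <= b -> 0 < a + b ->
  posdef (a%:C *: M1 + b%:C *: M2).
Proof.
move=> posM1 posM2 a_ge0 b_ge0 ab_gt0 z nz_z.
have h1 : 0 < hform M1 z := posM1 z nz_z.
have h2 : 0 < hform M2 z := posM2 z nz_z.
rewrite -[_ 0 0]/(hform _ z) hform_lincomb.
have [a_gt0 | a_le0] := ltrP 0 a.
  apply: ltr_wpDr; first by rewrite mulr_ge0 ?ler0c ?(ltW h2).
  by rewrite mulr_gt0 // ltcE /= eqxx.
have -> : a = 0 by apply/eqP; rewrite eq_le a_le0.
by rewrite mul0r add0r mulr_gt0 // ltcE /= eqxx; lra.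
Qed.

Lemma posdef_unitmx n (M : 'M[R[i]]_n) : posdef M -> M \in unitmx.
Proof.
move=> posM; apply: contraT; rewrite unitmxE unitfE negbK => /det0P[v nz_v vM].
have nz_adjv : adjmx v != 0.
  by apply: contra nz_v => /eqP adjv0; rewrite -[v]adjmxK adjv0 /adjmx map_mx0 trmx0.
by have := posM _ nz_adjv; rewrite adjmxK vM mul0mx mxE ltxx.
Qed.
End HermitianForms.

Section KMBSymplecticInvariance.
Variables (R : rcfType) (N : nat).
Implicit Types (S V A B : 'M[R]_(N + N)) (l : R).
Local Open Scope complex_scope.

Definition uncertainty_mx V : 'M[R[i]]_(N + N) :=
  cmx V + ('i%C / 2%:R) *: cmx (Omega R N).

Definition KMB_mx V l : 'M[R[i]]_(N + N) :=
  2%:R *: cmx V + ('i%C * l%:C) *: cmx (Omega R N).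

Lemma KMB_integrandE V A B l :
  KMB_integrand V A B l
  = \tr (cmx B *m invmx (KMB_mx V l) *m cmx A *m invmx (KMB_mx V l)).
Proof. by []. Qed.

Lemma KMB_mx_conic V l :
  KMB_mx V l = (1 + l)%:C *: uncertainty_mx V
             + (1 - l)%:C *: map_mx Num.conj (uncertainty_mx V).
Proof.
have conj_half_i : ('i%C / 2%:R)^*%R = - ('i%C / 2%:R) :> R[i].
  by rewrite complexiE rmorphM /= conjCi fmorphV /= conjC_nat mulNr.
rewrite /KMB_mx /uncertainty_mx map_mxD map_mxZ !map_conjC_cmx /= conj_half_i.
rewrite [cmx V]lock [cmx (Omega R N)]lock.
apply/matrixP => i j; rewrite !mxE rmorphD rmorphB rmorph1 /=.
by field.
Qed.

Lemma KMB_mx_unitmx V l : in_MN V -> -1 <= l <= 1 -> KMB_mx V l \in unitmx.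
Proof.
case=> _ posV /andP[l_ge l_le]; rewrite KMB_mx_conic.
by apply/posdef_unitmx/posdef_conic; [exact: posV | exact: posdef_conj | lra..].
Qed.

Lemma KMB_mx_symplectic S V l : symplectic S ->
  KMB_mx (S *m V *m S^T) l = cmx S *m KMB_mx V l *m (cmx S)^T.
Proof.
move=> sympS; rewrite /KMB_mx -{1}sympS !cmx_congr.
by rewrite mulmxDr mulmxDl -!scalemxAr -!scalemxAl.
Qed.

Lemma KMB_integrand_symplectic S V A B l :
  symplectic S -> in_MN V -> -1 <= l <= 1 ->
  KMB_integrand (S *m V *m S^T) (S *m A *m S^T) (S *m B *m S^T) l
  = KMB_integrand V A B l.
Proof.
move=> sympS inV l_in.
have unitS : cmx S \in unitmx by rewrite cmx_unitmx symplectic_unitmx.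
rewrite !KMB_integrandE KMB_mx_symplectic // !cmx_congr.
by rewrite mxtrace_congr_invmx ?unitmx_tr ?KMB_mx_unitmx.
Qed.
End KMBSymplecticInvariance.

Theorem theorem1 (R : realType) (N : nat) (hN : (1 <= N)%N)
  (S V A B : 'M[R]_(N + N)) :
  symplectic S -> in_MN V -> symmx A -> symmx B ->
  KMB (S *m V *m S^T) (S *m A *m S^T) (S *m B *m S^T) = KMB V A B.
Proof.
move=> sympS inV _ _.
have eq_integral (f : R[i] -> R) :
    \int[lebesgue_measure]_(l in `[-1%R, 1%R]%classic : set R)
      f (KMB_integrand (S *m V *m S^T) (S *m A *m S^T) (S *m B *m S^T) l)
    = \int[lebesgue_measure]_(l in `[-1%R, 1%R]%classic : set R)
      f (KMB_integrand V A B l).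
  apply: eq_Rintegral => l; rewrite inE /= in_itv /= => l_in.
  by rewrite KMB_integrand_symplectic.
by rewrite /KMB (eq_integral (@complex.Re R)) (eq_integral (@complex.Im R)).
Qed.
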